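(* For every quantifier-free insertion query $\rho$ over the graph schema $\{E\}$ there is a constant $m\in\mathbb N$ such that for every directed acyclic graph $G$ and every change $\delta=\rho(\bar a)$, either $\delta(G)$ has a (directed) cycle containing at most $m$ bridges, or for all nodes $u,v$ of $G$ such that there is a directed path from $u$ to $v$ in $\delta(G)$ it holds that $\mathrm{bd}(u,v)\le m$.
   Context: A quantifier-free insertion query $\rho(\bar p)$ for graphs is a rule $E := E(x,y)\lor\varphi(\bar p;x,y)$ with $\varphi$ a quantifier-free formula over $\{E\}$; the change $\delta=\rho(\bar a)$ maps a directed graph $G$ to the graph $\delta(G)$ with edge set $\{(b,c): G\models E(b,c)\lor\varphi(\bar a;b,c)\}$. A bridge is an edge of $\delta(G)$ that is not an edge of $G$. For nodes $u,v$ with a directed path from $u$ to $v$ in $\delta(G)$, the bridge distance $\mathrm{bd}(u,v)$ is the minimal number $d$ such that there is a directed path from $u$ to $v$ in $\delta(G)$ using exactly $d$ bridges. *)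

From mathcomp Require Import all_boot.
Set Implicit Arguments. Unset Strict Implicit. Unset Printing Implicit Defensive.

Inductive qvar (k : nat) : Type :=
  | VPar of 'I_k
  | VX
  | VY.

Inductive qf (k : nat) : Type :=
  | QTrue
  | QFalse
  | QEdge of qvar k & qvar k
  | QEq of qvar k & qvar k
  | QNot of qf k
  | QAnd of qf k & qf k
  | QOr of qf k & qf k.

Definition qassign (V : Type) k (a : 'I_k -> V) (b c : V) (t : qvar k) : V :=
  match t with VPar i => a i | VX => b | VY => c end.

Fixpoint qeval (V : eqType) (E : rel V) k (a : 'I_k -> V) (b c : V)
    (f : qf k) : bool :=
  match f with
  | QTrue => true
  | QFalse => false
  | QEdge s t => E (qassign a b c s) (qassign a b c t)
  | QEq s t => qassign a b c s == qassign a b c t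
  | QNot g => ~~ qeval E a b c g
  | QAnd g h => qeval E a b c g && qeval E a b c h
  | QOr g h => qeval E a b c g || qeval E a b c h
  end.

(* Edge relation of delta(G) for delta = rho(a), rho = (E := E(x,y) \/ phi). *)
Definition changed_edges (V : eqType) (E : rel V) k (phi : qf k) (a : 'I_k -> V)
  : rel V := fun b c => E b c || qeval E a b c phi.

(* Number of bridges (edges not in G) along the walk u :: p. *)
Definition nbridges (V : eqType) (E : rel V) (u : V) (p : seq V) : nat :=
  count (fun e : V * V => ~~ E e.1 e.2) (zip (u :: p) p).

Definition acyclic (V : eqType) (E : rel V) : Prop :=
  ~ exists (v : V) (p : seq V), [/\ p != [::], path E v p & last v p = v].

Definition is_cycle (V : eqType) (e : rel V) (v : V) (p : seq V) : Prop :=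
  [/\ p != [::], path e v p, last v p = v & uniq p].

Definition is_walk (V : eqType) (e : rel V) (u v : V) (p : seq V) : Prop :=
  path e u p /\ last u p = v.

Definition reachable (V : eqType) (e : rel V) (u v : V) : Prop :=
  exists p, is_walk e u v p.

(* bd(u,v) <= m, unfolded: the least d such that some walk from u to v in
   delta(G) uses exactly d bridges is at most m, i.e. some d <= m is attained. *)
Definition bd_le (V : eqType) (E e : rel V) (u v : V) (m : nat) : Prop :=
  exists d, d <= m /\ exists p, is_walk e u v p /\ nbridges E u p = d.

(* The atomic type of a node [b] over the parameters [a] (equalities and edges
   between [b] and the [a i], and the loop at [b]) determines the truth of a
   quantifier-free [phi(a; b, c)] as soon as the atomic relations between [b]
   and [c] are fixed.  Let (u, c) and later (b, c') be two bridges of a walk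
   whose sources u and b have the same type.  Unless u = c', E(u, c') holds, or
   one of E(c', u), E(c', b), b = c' closes a cycle through few bridges, the
   pairs (u, c') and (b, c') have the same atomic type, so (u, c') is a bridge
   too and the walk can be shortcut.  Hence, if no cycle has few bridges, a
   walk of minimal bridge number has bridges with pairwise distinct source
   types, and there are only finitely many types. *)
From mathcomp Require Import all_boot.
From Stdlib Require Import Classical.
From mathcomp Require Import zify.

Set Implicit Arguments. Unset Strict Implicit. Unset Printing Implicit Defensive.

Lemma not_uniq_split (T : eqType) (s : seq T) :
  ~~ uniq s -> exists s1 x s2 s3, s = s1 ++ x :: s2 ++ x :: s3.
Proof.
elim: s => [|y s IH] //=; have [ys _ | ys /= us] := boolP (y \in s).
  by case/splitPr: ys => s2 s3; exists [::], y, s2, s3.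
by have [s1 [x [s2 [s3 ->]]]] := IH us; exists (y :: s1), x, s2, s3.
Qed.

Lemma mem_zip_walk (T : eqType) (c : T) p x :
  x \in zip (c :: p) p ->
  exists q1 c' q2, p = q1 ++ c' :: q2 /\ x = (last c q1, c').
Proof.
elim: p c => [|d p IH] c //=; rewrite in_cons => /orP[/eqP -> | /IH].
  by exists [::], d, p.
by case=> [q1 [c' [q2 [-> ->]]]]; exists (d :: q1), c', q2.
Qed.

Section Bridges.
Variables (V : eqType) (E : rel V).

Lemma nbridges_cons u c p : nbridges E u (c :: p) = ~~ E u c + nbridges E c p.
Proof. by []. Qed.

Lemma nbridges_cat u s t :
  nbridges E u (s ++ t) = nbridges E u s + nbridges E (last u s) t.
Proof. by elim: s u => [|x s IH] u //=; rewrite !nbridges_cons IH addnA. Qed.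

Lemma closed_walk_cycle (e : rel V) v p :
  p != [::] -> path e v p -> last v p = v ->
  exists v' p', is_cycle e v' p' /\ nbridges E v' p' <= nbridges E v p.
Proof.
have [n lt_p_n] := ubnP (size p); elim: n => // n IH in v p lt_p_n *.
move=> p0 pp pv; have [up | /not_uniq_split [s1 [x [s2 [s3 def_p]]]]] := boolP (uniq p).
  by exists v, p.
subst p; move: pp; rewrite cat_path /= cat_path /= => /and5P[_ _ px ex _].
have lt_n : size (rcons s2 x) < n.
  by move: lt_p_n; rewrite !size_cat /= size_cat /= size_rcons; lia.
have loop_x : path e x (rcons s2 x) by rewrite rcons_path px.
have loop_x0 : rcons s2 x != [::] by case: (s2).
have [v' [p' [cyc le]]] := IH x _ lt_n loop_x0 loop_x (last_rcons _ _ _).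
exists v', p'; split=> //; apply: (leq_trans le).
rewrite -cats1 !(nbridges_cat, nbridges_cons) /nbridges /=; lia.
Qed.

End Bridges.

Definition atomic_type k := ({ffun 'I_k -> bool * bool * bool} * bool)%type.

Section AtomicTypes.
Variables (k : nat) (V : eqType) (E : rel V) (a : 'I_k -> V).

Definition atype (b : V) : atomic_type k :=
  ([ffun i => (b == a i, E b (a i), E (a i) b)], E b b).

Lemma atypeP b b' : atype b = atype b' ->
  [/\ forall i, (b == a i) = (b' == a i), forall i, E b (a i) = E b' (a i),
      forall i, E (a i) b = E (a i) b' & E b b = E b' b'].
Proof.
move=> tbb'; have Ebb := congr1 snd tbb'.
have /= tb i := congr1 (fun t : atomic_type k => t.1 i) tbb'.
by split=> // i; move: (tb i); rewrite !ffunE => -[].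
Qed.

Lemma qeval_atype b c b' c' (f : qf k) :
  atype b = atype b' -> atype c = atype c' ->
  E b c = E b' c' -> E c b = E c' b' -> (b == c) = (b' == c') ->
  qeval E a b c f = qeval E a b' c' f.
Proof.
move=> /atypeP[eqb Eb Eb' Ebb] /atypeP[eqc Ec Ec' Ecc] Ebc Ecb eqbc.
have atom_eq s t : (qassign a b c s == qassign a b c t) =
                   (qassign a b' c' s == qassign a b' c' t).
  by case: s t => [i||] [j||] //=; rewrite ?eqxx ?[a _ == _]eq_sym
    ?eqb ?eqc // eq_sym eqbc eq_sym.
have atom_edge s t : E (qassign a b c s) (qassign a b c t) =
                     E (qassign a b' c' s) (qassign a b' c' t).
  by case: s t => [i||] [j||] /=.
by elim: f => //= [g -> | g -> h -> | g -> h ->].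
Qed.

End AtomicTypes.

Definition ntypes k := #|{: atomic_type k}|.

Section ShortWalks.
Variables (k : nat) (phi : qf k) (V : eqType) (E : rel V) (a : 'I_k -> V).
Variable m : nat.
Local Notation e := (changed_edges E phi a).
Local Notation atype := (atype E a).

Hypothesis few_bridges_acyclic :
  forall v p, p != [::] -> path e v p -> last v p = v -> m < nbridges E v p.

Lemma bridge_shortcut u c q c' :
  ~~ E u c -> e u c -> path e c q -> ~~ E (last c q) c' -> e (last c q) c' ->
  atype u = atype (last c q) -> (nbridges E c q).+2 <= m ->
  exists2 r, is_walk e u c' r & nbridges E u r <= 1.
Proof.
move=> nEuc euc pq; set b := last c q => nEbc ebc tub short.
have no_closed v p : p != [::] -> path e v p -> last v p = v ->
    nbridges E v p <= m -> False.
  by move=> p0 pp pv; rewrite leqNgt few_bridges_acyclic.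
have [<- | neq_uc] := eqVneq u c'; first by exists [::].
suff euc' : e u c' by exists [:: c']; [rewrite /is_walk /= euc' | exact: count_size].
have [Euc' | nEuc'] := boolP (E u c'); first by rewrite /changed_edges Euc'.
have nEcu : ~~ E c' u.
  apply/negP => Ecu; apply: (no_closed u (c :: q ++ [:: c'; u])) => //.
  - by rewrite /= euc cat_path pq /= ebc /changed_edges Ecu.
  - by rewrite /= last_cat.
  - rewrite nbridges_cons nbridges_cat !nbridges_cons nEuc nEbc Ecu.
    by rewrite -[nbridges E u [::]]/0; lia.
have nEcb : ~~ E c' b.
  apply/negP => Ecb; apply: (no_closed b [:: c'; b]) => //.
    by rewrite /= ebc /changed_edges Ecb.
  by rewrite /nbridges /= nEbc Ecb; lia.
have neq_bc : b != c'.
  apply/negP => /eqP eq_bc; apply: (no_closed b [:: b]) => //.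
    by rewrite /= {2}eq_bc ebc.
  by rewrite /nbridges /= {2}eq_bc nEbc; lia.
move: ebc; rewrite /changed_edges (negbTE nEbc) (negbTE nEuc') /=.
rewrite (@qeval_atype _ _ _ _ u c' b c' phi tub) //.
- by rewrite (negbTE nEuc') (negbTE nEbc).
- by rewrite (negbTE nEcu) (negbTE nEcb).
- by rewrite (negbTE neq_uc) (negbTE neq_bc).
Qed.

Definition bridge_types u p :=
  [seq atype x.1 | x <- zip (u :: p) p & ~~ E x.1 x.2].

Lemma size_bridge_types u p : size (bridge_types u p) = nbridges E u p.
Proof. by rewrite size_map size_filter. Qed.

Hypothesis ntypes_lt : ntypes k < m.

Lemma walk_shortens_or_types_uniq u p : path e u p ->
  uniq (bridge_types u p) \/
  exists p', [/\ path e u p', last u p' = last u p & nbridges E u p' < nbridges E u p].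
Proof.
elim: p u => [|c p IH] u /=; first by left.
case/andP=> euc pp; have [up | [p' [pp' lp' lt_p']]] := IH c pp; last first.
  by right; exists (c :: p'); rewrite /= euc nbridges_cons ltn_add2l.
have [Euc | nEuc] := boolP (E u c); first by left; rewrite /bridge_types /= Euc.
have [|fresh] := boolP (atype u \in bridge_types c p); last first.
  by left; rewrite /bridge_types /= nEuc /= -/(bridge_types c p) fresh.
case/mapP=> -[b c'']; rewrite mem_filter => /andP[/= nEbc].
case/mem_zip_walk=> q [c' [p2 [def_p [eq_b eq_c]]]] /= tub; subst p b c''.
move: pp; rewrite cat_path /= => /and3P[pq ebc pp2].
have nb_p : nbridges E c (q ++ c' :: p2) = (nbridges E c q).+1 + nbridges E c' p2.
  by rewrite nbridges_cat nbridges_cons nEbc addnA addn1.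
have le_ntypes : nbridges E c (q ++ c' :: p2) <= ntypes k.
  by rewrite -size_bridge_types -(card_uniqP up) max_card.
have [|r [pr lr] le_r] := bridge_shortcut nEuc euc pq nEbc ebc tub.
  by move: le_ntypes ntypes_lt; rewrite nb_p; lia.
right; exists (r ++ p2); split.
- by rewrite cat_path pr lr.
- by rewrite !last_cat lr.
- by rewrite nbridges_cat lr nbridges_cons nb_p nEuc; lia.
Qed.

Lemma bridge_bounded_walk u p : path e u p ->
  exists p', [/\ path e u p', last u p' = last u p & nbridges E u p' <= ntypes k].
Proof.
have [n lt_p_n] := ubnP (nbridges E u p); elim: n => // n IH in p lt_p_n *.
move=> pp; have [up | [p' [pp' lp' lt_p']]] := walk_shortens_or_types_uniq pp.
  by exists p; rewrite -size_bridge_types -(card_uniqP up) max_card.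
have [p'' [pp'' lp'' le]] := IH p' (leq_trans lt_p' lt_p_n) pp'.
by exists p''; rewrite lp'' lp'.
Qed.

End ShortWalks.

Theorem lemma4p4 :
  forall (k : nat) (phi : qf k), exists m : nat,
    forall (V : finType) (E : rel V), acyclic E ->
    forall a : 'I_k -> V,
      (exists (v : V) (p : seq V),
          is_cycle (changed_edges E phi a) v p /\ nbridges E v p <= m)
      \/
      (forall u v : V, reachable (changed_edges E phi a) u v ->
          bd_le E (changed_edges E phi a) u v m).
Proof.
move=> k phi; exists (ntypes k).+1 => V E _ a.
set e := changed_edges E phi a.
have [[v [p [p0 pp pv short]]] | no_short] := classic (exists v p,
    [/\ p != [::], path e v p, last v p = v & nbridges E v p <= (ntypes k).+1]).
  left; have [v' [p' [cyc le]]] := closed_walk_cycle E p0 pp pv.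
  by exists v', p'; split; last exact: leq_trans short.
right=> u _ [p [pp <-]].
have few_bridges_acyclic w q : q != [::] -> path e w q -> last w q = w ->
    (ntypes k).+1 < nbridges E w q.
  move=> q0 pq qw; rewrite ltnNge; apply/negP => le.
  by apply: no_short; exists w, q.
have [p' [pp' lp' le]] := bridge_bounded_walk few_bridges_acyclic (ltnSn _) pp.
by exists (nbridges E u p'); split; [exact: leqW | exists p'].
Qed.
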